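(* Let $\theta,\alpha\in(0,\pi/2)$ with $\theta\ne\pi/4$. For $b\in\mathrm{Im}\,\mathbb{H}$ and $c\in\mathbb{H}$ set $$V=\begin{bmatrix}-b\cos^2\alpha\cos\theta\sin\theta\\ b\cos\alpha\sin\alpha\cos\theta\end{bmatrix},\qquad W=\begin{bmatrix}\bar c\sin\alpha\sin^2\theta+c\sin\alpha\cos^2\theta\\ \bar c\cos\alpha\sin\theta\end{bmatrix}.$$ If there exist non-zero $b\in\mathrm{Im}\,\mathbb{H}$ and $c\in\mathbb{H}$ with $V=W$, then $\tan^2\alpha=\dfrac{\sin^2\theta}{\cos^2\theta-\sin^2\theta}$.
   Context: $\mathbb{H}$ denotes the quaternions and $\mathrm{Im}\,\mathbb{H}$ the purely imaginary quaternions; $\bar c$ is quaternionic conjugation. *)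

From Stdlib Require Import Reals.
Open Scope R_scope.

Record quat : Type := mkQ { qre : R; qi : R; qj : R; qk : R }.

Definition q0 : quat := mkQ 0 0 0 0.
Definition qadd (p q : quat) : quat :=
  mkQ (qre p + qre q) (qi p + qi q) (qj p + qj q) (qk p + qk q).
Definition qopp (p : quat) : quat := mkQ (- qre p) (- qi p) (- qj p) (- qk p).
Definition qscale (r : R) (p : quat) : quat :=
  mkQ (r * qre p) (r * qi p) (r * qj p) (r * qk p).
Definition qconj (p : quat) : quat := mkQ (qre p) (- qi p) (- qj p) (- qk p).
Definition is_imH (p : quat) : Prop := qre p = 0.

Definition Vvec (theta alpha : R) (b : quat) : quat * quat :=
  ( qopp (qscale (cos alpha ^ 2 * cos theta * sin theta) b),
    qscale (cos alpha * sin alpha * cos theta) b ).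

Definition Wvec (theta alpha : R) (c : quat) : quat * quat :=
  ( qadd (qscale (sin alpha * sin theta ^ 2) (qconj c))
         (qscale (sin alpha * cos theta ^ 2) c),
    qscale (cos alpha * sin theta) (qconj c) ).

(* On each imaginary coordinate the two entries of V = W give two real linear equations
   in the coordinates of b and c.  Eliminating the coordinate of c leaves the coordinate
   of b multiplied by cos(theta) (cos^2(alpha) sin^2(theta) - sin^2(alpha) cos(2 theta)),
   so a non-zero b forces that factor to vanish, which is the claimed identity for
   tan^2(alpha). *)
From Stdlib Require Import Reals Lra.
Open Scope R_scope.

Definition tan_defect (theta alpha : R) : R :=
  cos alpha ^ 2 * sin theta ^ 2 - sin alpha ^ 2 * (cos theta ^ 2 - sin theta ^ 2).

Lemma coordinate_elimination (ca sa ct st x y : R) : ca <> 0 ->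
  - (ca ^ 2 * ct * st * x) = sa * st ^ 2 * - y + sa * ct ^ 2 * y ->
  ca * sa * ct * x = ca * st * - y ->
  ct * (ca ^ 2 * st ^ 2 - sa ^ 2 * (ct ^ 2 - st ^ 2)) * x = 0.
Proof.
  intros Hca E1 E2.
  assert (E2' : sa * ct * x + st * y = 0).
  { apply (Rmult_eq_reg_l ca); [lra|]. lra. }
  replace (ct * (ca ^ 2 * st ^ 2 - sa ^ 2 * (ct ^ 2 - st ^ 2)) * x) with
    (- st * (- (ca ^ 2 * ct * st * x) - (sa * st ^ 2 * - y + sa * ct ^ 2 * y))
     - sa * (ct ^ 2 - st ^ 2) * (sa * ct * x + st * y)) by ring.
  rewrite E1, E2'; ring.
Qed.

Lemma Vvec_Wvec_imH_eq0 (theta alpha : R) (b c : quat) :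
  cos alpha <> 0 -> cos theta * tan_defect theta alpha <> 0 ->
  is_imH b -> Vvec theta alpha b = Wvec theta alpha c -> b = q0.
Proof.
  intros Hca HD Hb E.
  destruct b as [b0 b1 b2 b3], c as [c0 c1 c2 c3].
  unfold is_imH in Hb; simpl in Hb; subst b0.
  unfold Vvec, Wvec, qopp, qscale, qadd, qconj in E; simpl in E.
  injection E; intros F3 F2 F1 _ G3 G2 G1 _.
  assert (Hzero : forall x, cos theta * tan_defect theta alpha * x = 0 -> x = 0).
  { intros x Hx. destruct (Rmult_integral _ _ Hx); [contradiction | assumption]. }
  unfold q0; f_equal; apply Hzero; unfold tan_defect;
    eapply coordinate_elimination; eassumption.
Qed.

Lemma tan_sq_of_tan_defect_eq0 (theta alpha : R) :
  0 < theta < PI / 2 -> 0 < alpha < PI / 2 -> tan_defect theta alpha = 0 ->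
  tan alpha ^ 2 = sin theta ^ 2 / (cos theta ^ 2 - sin theta ^ 2).
Proof.
  intros Ht Ha HD; unfold tan_defect in HD.
  assert (st : 0 < sin theta) by (apply sin_gt_0; lra).
  assert (ca : 0 < cos alpha) by (apply cos_gt_0; lra).
  assert (Hc2 : cos theta ^ 2 - sin theta ^ 2 <> 0).
  { intro Z; rewrite Z in HD.
    assert (0 < cos alpha ^ 2 * sin theta ^ 2)
      by (apply Rmult_lt_0_compat; apply pow_lt; lra).
    lra. }
  unfold tan; field_simplify_eq; [lra | split; lra].
Qed.

Theorem proposition3p2 (theta alpha : R) :
  0 < theta < PI / 2 -> 0 < alpha < PI / 2 -> theta <> PI / 4 ->
  (exists b c : quat, is_imH b /\ b <> q0 /\ c <> q0 /\
     Vvec theta alpha b = Wvec theta alpha c) ->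
  tan alpha ^ 2 = sin theta ^ 2 / (cos theta ^ 2 - sin theta ^ 2).
Proof.
  intros Ht Ha _ [b [c [Hb [Hb0 [_ E]]]]].
  apply tan_sq_of_tan_defect_eq0; [assumption | assumption |].
  assert (ct : 0 < cos theta) by (apply cos_gt_0; lra).
  assert (ca : 0 < cos alpha) by (apply cos_gt_0; lra).
  destruct (Req_dec (tan_defect theta alpha) 0) as [| HD]; [assumption | exfalso].
  apply Hb0, (Vvec_Wvec_imH_eq0 theta alpha b c); [lra | | assumption | assumption].
  apply Rmult_integral_contrapositive; split; lra.
Qed.
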